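(* For every $m\ge0$, $\sigma(x^m)=(-1)^my^m$ and $\sigma(y^m)=(-1)^mx^m$ in $\mathcal S$.
   Context: Chord diagrams and $w_{\mathfrak{sl}_2}(D)=\sum_\varphi x_{\varphi(p_1)}\cdots x_{\varphi(p_{2n})}\in\mathbb C[c]$ ($x_1,x_2,x_3$ the basis $\tfrac12\begin{pmatrix}0&1\\1&0\end{pmatrix},\tfrac12\begin{pmatrix}0&-i\\ i&0\end{pmatrix},\tfrac12\begin{pmatrix}1&0\\0&-1\end{pmatrix}$ of $\mathfrak{sl}_2$, $c=\sum x_i^2$, endpoints read in order from a cut point, $\varphi$ over maps chords$\to\{1,2,3\}$). A share: two oriented intervals (strand 1, strand 2) with finitely many chords, up to orientation-preserving diffeomorphisms of each strand; bridges are chords with one endpoint on each strand. Join $(I,H)$: chord diagram whose circle reads strand 1 of $I$, strand 1 of $H$, strand 2 of $I$, strand 2 of $H$. $\mathcal S$: quotient of the $\mathbb C$-span of shares by $I\sim I'$ iff $w_{\mathfrak{sl}_2}((I,H))=w_{\mathfrak{sl}_2}((I',H))$ for all shares $H$. $x^m$ is the class of the share with $m$ bridges occurring in the same order on both strands; $y^m$ is the class of the share with $m$ bridges $b_1,\dots,b_m$ in order $b_1,\dots,b_m$ on strand 1 and $b_m,\dots,b_1$ on strand 2. For a share $I$ with $m$ chords, $\overline I$ reverses the order of chord endpoints along one strand, and $\sigma(I)=(-1)^m\overline I$, extended linearly; it is a well-defined involution of $\mathcal S$. *)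

From HB Require Import structures.
From mathcomp Require Import all_boot all_order all_algebra all_field.
Set Implicit Arguments. Unset Strict Implicit. Unset Printing Implicit Defensive.
Import Order.TTheory GRing.Theory Num.Theory.
Local Open Scope ring_scope.

(* A share: strand 1 and strand 2, each the sequence of chord-endpoint
   labels in the order of the strand's orientation.  A chord is a label
   occurring exactly twice in total; a bridge has one endpoint per strand. *)
Record share := Share { strand1 : seq nat; strand2 : seq nat }.

Definition share_wf (I : share) : Prop :=
  forall l, l \in strand1 I ++ strand2 I ->
    count_mem l (strand1 I ++ strand2 I) = 2%N.

Definition nchords (I : share) : nat := (size (strand1 I ++ strand2 I))./2.

(* join (I,H): circle reads strand 1 of I, strand 1 of H, strand 2 of I,
   strand 2 of H; the chords of H are relabelled to be disjoint from I. *)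
Definition join (I H : share) : seq nat :=
  let off := (foldr maxn 0%N (strand1 I ++ strand2 I)).+1 in
  strand1 I ++ map (addn off) (strand1 H) ++ strand2 I
            ++ map (addn off) (strand2 H).

(* y : 'I_3 -> A are images of x_1, x_2, x_3 (indices 0,1,2) satisfying the
   sl_2 bracket relations [x_a, x_b] = i eps_abc x_c of the given basis. *)
Definition sl2rel (A : algType algC) (y : 'I_3 -> A) : Prop :=
  [/\ y 0 * y 1 - y 1 * y 0 = 'i *: y 2,
      y 1 * y 2 - y 2 * y 1 = 'i *: y 0
    & y 2 * y 0 - y 0 * y 2 = 'i *: y 1].

(* w_{sl2} of a chord diagram (word of labels read from the cut point),
   evaluated through y : sum over all maps chords -> {1,2,3}. *)
Definition wA (A : algType algC) (y : 'I_3 -> A) (s : seq nat) : A :=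
  \sum_(t : (size (undup s)).-tuple 'I_3)
     \prod_(l <- s) y (nth ord0 t (index l (undup s))).

(* Equality of two elements of U(sl2) given as formal expressions: by the
   universal property, they agree in every algC-algebra receiving sl2. *)
Definition Ueq (F G : forall A : algType algC, ('I_3 -> A) -> A) : Prop :=
  forall (A : algType algC) (y : 'I_3 -> A), sl2rel y -> F A y = G A y.

Definition comb := seq (algC * share).

Definition wjoin (c : comb) (H : share) :=
  fun (A : algType algC) (y : 'I_3 -> A) =>
    \sum_(p <- c) p.1 *: wA y (join p.2 H).

(* Equality of classes in the quotient S. *)
Definition eqS (c1 c2 : comb) : Prop :=
  forall H : share, share_wf H -> Ueq (wjoin c1 H) (wjoin c2 H).

Definition sbar (I : share) : share := Share (strand1 I) (rev (strand2 I)).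
Definition sigma (c : comb) : comb :=
  [seq ((-1) ^+ nchords p.2 * p.1, sbar p.2) | p <- c].

Definition xsh (m : nat) : share := Share (iota 0 m) (iota 0 m).
Definition ysh (m : nat) : share := Share (iota 0 m) (rev (iota 0 m)).
Definition cls (I : share) : comb := [:: (1, I)].
Definition scl (a : algC) (I : share) : comb := [:: (a, I)].

From mathcomp Require Import all_boot all_order all_algebra all_field.
Import GRing.Theory.
Local Open Scope ring_scope.

Lemma eqS_refl (c : comb) : eqS c c.
Proof. by []. Qed.

Lemma nchords_Share (s1 s2 : seq nat) :
  size s1 = size s2 -> nchords (Share s1 s2) = size s1.
Proof. by move=> eq_size; rewrite /nchords /= size_cat -eq_size addnn doubleK. Qed.

Lemma nchords_xsh (m : nat) : nchords (xsh m) = m.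
Proof. by rewrite nchords_Share size_iota. Qed.

Lemma nchords_ysh (m : nat) : nchords (ysh m) = m.
Proof. by rewrite nchords_Share ?size_rev size_iota. Qed.

Lemma sbar_xsh (m : nat) : sbar (xsh m) = ysh m.
Proof. by []. Qed.

Lemma sbar_ysh (m : nat) : sbar (ysh m) = xsh m.
Proof. by rewrite /sbar /= revK. Qed.

Lemma sigma_cls (I : share) :
  sigma (cls I) = scl ((-1) ^+ nchords I) (sbar I).
Proof. by rewrite /sigma /= mulr1. Qed.

Theorem lemma7 : forall m : nat,
  eqS (sigma (cls (xsh m))) (scl ((-1) ^+ m) (ysh m)) /\
  eqS (sigma (cls (ysh m))) (scl ((-1) ^+ m) (xsh m)).
Proof.
move=> m; rewrite !sigma_cls nchords_xsh nchords_ysh sbar_xsh sbar_ysh.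
by split; apply: eqS_refl.
Qed.
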